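(* In the setting below, any correct sink member and any correct non-sink member are intertwined: for every correct $i\in V_{\mathit{sink}}$, every correct $i'\in\Pi\setminus V_{\mathit{sink}}$, every quorum $Q$ of $i$ and every quorum $Q'$ of $i'$, we have $|Q\cap Q'|>f$.
   Context: Processes and faults: $\Pi$ is a finite set of processes, $f\ge0$ a known integer; $W\subseteq\Pi$ is the set of correct processes and $F=\Pi\setminus W$ the Byzantine faulty processes, $|F|\le f$. Faulty processes may declare arbitrary slices. Slices and quorums: each process $i$ has a set $\mathcal{S}_i$ of slices (subsets of $\Pi$). $Q\subseteq\Pi$ is a quorum if every $i\in Q$ has some $S\in\mathcal{S}_i$ with $S\subseteq Q$; a quorum of $i$ is a quorum containing $i$. Two correct processes $i,j$ are intertwined if $|Q\cap Q'|>f$ for every quorum $Q$ of $i$ and every quorum $Q'$ of $j$. Knowledge graph: each process $i$ is given $\mathit{PD}_i\subseteq\Pi$; $G_{\mathit{di}}$ is the directed graph on $\Pi$ with edge $(i,j)$ iff $j\in\mathit{PD}_i$. A sink component is a strongly connected component of $G_{\mathit{di}}$ from which no path leads outside it. A directed graph is $k$-OSR if (1) its underlying undirected graph is connected; (2) its condensation into strongly connected components has exactly one sink $G_{\mathit{sink}}$; (3) $G_{\mathit{sink}}$ is $k$-strongly connected (every ordered pair of its nodes joined by $k$ node-disjoint directed paths); (4) from every node outside $G_{\mathit{sink}}$ to every node in it there are at least $k$ node-disjoint directed paths. Standing assumption: $G_{\mathit{di}}$ has a unique sink component with vertex set $V_{\mathit{sink}}$, which contains at least $2f+1$ correct processes,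 and the graph obtained from $G_{\mathit{di}}$ by deleting $F$ is $(f+1)$-OSR. Slice construction: let $m=\lceil (|V_{\mathit{sink}}|+f+1)/2\rceil$. Every correct $i\in V_{\mathit{sink}}$ has $\mathcal{S}_i=\{S\subseteq V_{\mathit{sink}}: |S|=m\}$. Every correct $i\notin V_{\mathit{sink}}$ is given a set $V_i\subseteq V_{\mathit{sink}}$ containing at least $f+1$ correct members of $V_{\mathit{sink}}$, and has $\mathcal{S}_i=\{S\subseteq V_i: |S|=f+1\}$. *)

From mathcomp Require Import all_boot.
Set Implicit Arguments. Unset Strict Implicit. Unset Printing Implicit Defensive.

Section Defs.
Variable T : finType.

Definition is_quorum (slices : T -> {set {set T}}) (Q : {set T}) : Prop :=
  forall i, i \in Q -> exists2 S, S \in slices i & S \subset Q.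

Definition quorum_of (slices : T -> {set {set T}}) (Q : {set T}) (i : T) : Prop :=
  is_quorum slices Q /\ i \in Q.

Definition intertwined (slices : T -> {set {set T}}) (f : nat) (i j : T) : Prop :=
  forall Q Q', quorum_of slices Q i -> quorum_of slices Q' j -> f < #|Q :&: Q'|.

Definition induced (V : {set T}) (e : rel T) : rel T :=
  fun a b => [&& a \in V, b \in V & e a b].

Definition reach (V : {set T}) (e : rel T) (x y : T) : bool :=
  connect (induced V e) x y.

Definition is_scc (V : {set T}) (e : rel T) (C : {set T}) : Prop :=
  [/\ C \subset V, C != set0,
      {in C &, forall x y, reach V e x y}
    & forall x y, x \in C -> y \in V -> reach V e x y -> reach V e y x -> y \in C].

Definition is_sink_comp (V : {set T}) (e : rel T) (C : {set T}) : Prop :=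
  is_scc V e C /\ (forall x y, x \in C -> reach V e x y -> y \in C).

(* p is the list of intermediate vertices of a simple directed path
   from x to y inside V *)
Definition dpath (V : {set T}) (e : rel T) (x y : T) (p : seq T) : bool :=
  [&& path e x (rcons p y), all (fun z => z \in V) (x :: rcons p y)
    & uniq (x :: rcons p y)].

Definition k_disjoint_paths (V : {set T}) (e : rel T) (k : nat) (x y : T) : Prop :=
  exists ps : seq (seq T),
    [/\ size ps = k, uniq ps, all (dpath V e x y) ps
      & forall p q, p \in ps -> q \in ps -> p != q ->
          forall z, z \in p -> z \notin q].

Definition undirected_connected (V : {set T}) (e : rel T) : Prop :=
  {in V &, forall x y,
     connect (fun a b => [&& a \in V, b \in V & e a b || e b a]) x y}.

Definition k_OSR (V : {set T}) (e : rel T) (k : nat) : Prop :=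
  undirected_connected V e /\
  exists Cs : {set T},
    [/\ is_sink_comp V e Cs,
        (forall C, is_sink_comp V e C -> C = Cs),
        (forall x y, x \in Cs -> y \in Cs -> x != y -> k_disjoint_paths Cs e k x y)
      & (forall x y, x \in V :\: Cs -> y \in Cs -> k_disjoint_paths V e k x y)].

Definition kgraph (PD : T -> {set T}) : rel T := fun i j => j \in PD i.

End Defs.

(* m = ceil((|V_sink| + f + 1) / 2) *)
Definition sink_slice_size (nsink f : nat) : nat := (nsink + f + 1 + 1) %/ 2.

From mathcomp Require Import all_boot.
From mathcomp Require Import zify.

(* A quorum Q' of a correct process outside the sink contains one of its
   slices: f + 1 processes of the sink, at least one of them a correct j.
   Then Q' also contains a slice of j, an m-subset of the sink, and so does
   every quorum Q of a correct sink member.  Two m-subsets of a set of size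
   n overlap in at least 2m - n > f elements. *)

Lemma sink_slice_size_double n f : n + f < (sink_slice_size n f).*2.
Proof. rewrite /sink_slice_size; lia. Qed.

Section SetCounting.
Context {T : finType}.
Implicit Types V W A B S : {set T}.

Lemma cardsI_lower_bound {V A B} :
  A \subset V -> B \subset V -> #|A| + #|B| <= #|V| + #|A :&: B|.
Proof.
move=> sAV sBV; rewrite -cardsUI leq_add2r.
by apply: subset_leq_card; rewrite subUset sAV.
Qed.

Lemma sink_slices_meet {V A B f} :
  A \subset V -> B \subset V ->
  #|A| = sink_slice_size #|V| f -> #|B| = sink_slice_size #|V| f ->
  f < #|A :&: B|.
Proof.
move=> sAV sBV cA cB.
have := cardsI_lower_bound sAV sBV; have := sink_slice_size_double #|V| f.
rewrite cA cB; lia.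
Qed.

Lemma meets_of_card_gt_compl W S : #|~: W| < #|S| -> exists2 j, j \in S & j \in W.
Proof.
move=> ltWS; have: 0 < #|S :&: W|.
  rewrite -(cardsID W S) in ltWS.
  have: #|S :\: W| <= #|~: W| by rewrite setDE subset_leq_card ?subsetIr.
  lia.
by rewrite card_gt0 => /set0Pn [j]; rewrite inE => /andP [jS jW]; exists j.
Qed.

End SetCounting.

Theorem lemma4 (Pi : finType) (f : nat) (W : {set Pi})
  (hF : #|~: W| <= f)
  (slices : Pi -> {set {set Pi}}) (PD : Pi -> {set Pi}) (Vsink : {set Pi})
  (hsink : is_sink_comp [set: Pi] (kgraph PD) Vsink)
  (hsink_uniq : forall C, is_sink_comp [set: Pi] (kgraph PD) C -> C = Vsink)
  (hsink_correct : 2 * f + 1 <= #|Vsink :&: W|)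
  (hOSR : k_OSR W (kgraph PD) f.+1)
  (Vi : Pi -> {set Pi})
  (hslices_sink : forall i, i \in W -> i \in Vsink ->
      slices i = [set S : {set Pi} | (S \subset Vsink)
                   && (#|S| == sink_slice_size #|Vsink| f)])
  (hVi : forall i, i \in W -> i \notin Vsink ->
      Vi i \subset Vsink /\ f.+1 <= #|Vi i :&: W|)
  (hslices_out : forall i, i \in W -> i \notin Vsink ->
      slices i = [set S : {set Pi} | (S \subset Vi i) && (#|S| == f.+1)]) :
  forall i i', i \in W -> i \in Vsink -> i' \in W -> i' \notin Vsink ->
    intertwined slices f i i'.
Proof.
move=> i i' iW iV i'W i'V Q Q' [qQ iQ] [qQ' i'Q'].
have [S' + sS'Q'] := qQ' i' i'Q'.
rewrite hslices_out // inE => /andP [sS'Vi /eqP cS'].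
have [j jS' jW] : exists2 j, j \in S' & j \in W.
  by apply: meets_of_card_gt_compl; rewrite cS' ltnS.
have jV : j \in Vsink.
  by have [sViV _] := hVi i' i'W i'V; apply/(subsetP sViV)/(subsetP sS'Vi).
have [Sj + sSjQ'] := qQ' j (subsetP sS'Q' j jS').
rewrite hslices_sink // inE => /andP [sSjV /eqP cSj].
have [S + sSQ] := qQ i iQ.
rewrite hslices_sink // inE => /andP [sSV /eqP cS].
apply: leq_trans (subset_leq_card (setISS sSQ sSjQ')).
exact: sink_slices_meet sSV sSjV cS cSj.
Qed.
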